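(* Any DRSL formula $\psi$ can be represented equivalently by a formula in the form $\#^1_{s_1}\phi_1\wedge...\wedge \#^k_{s_k}\phi_k$, where $\phi_1,...,\phi_n\in\mathcal{L}^{\mathrel{|}\!\sim}$.
   Context: DRSL formulas are given by $\psi::=\phi\mid\#_s\psi\mid\psi\wedge\psi$ with $\#\in\{\Box,\Diamond\}$, $s$ a standpoint symbol (including the universal standpoint $*$), and $\phi\in\mathcal{L}^{\mathrel{|}\!\sim}$, the propositional KLM language $\phi::=\alpha\mid\alpha\mathrel{|}\!\sim\beta\mid\phi\wedge\phi$ ($\alpha,\beta$ Boolean). Equivalence is with respect to ranked standpoint structures $M=(\Pi,\sigma,\gamma)$ (precisifications $\Pi$; $\sigma$ assigning each standpoint a nonempty set of precisifications with $\sigma( * )=\Pi$; $\gamma$ assigning each precisification a ranked interpretation), where $M,\pi\Vdash\phi$ iff $\gamma(\pi)\Vdash\phi$, $\Box_s$/$\Diamond_s$ quantify universally/existentially over $\sigma(s)$, conjunction is componentwise, and $M\Vdash\psi$ iff $\psi$ holds at all precisifications. Each $\#^i\in\{\Box,\Diamond\}$. *)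

From mathcomp Require Import all_boot.
Set Implicit Arguments.
Unset Strict Implicit.
Unset Printing Implicit Defensive.

Section Syntax.
Variable Atom : finType.

Inductive bform : Type :=
| BTop | BBot
| BAtom of Atom
| BNot of bform
| BAnd of bform & bform
| BOr of bform & bform
| BImp of bform & bform.

Inductive kform : Type :=
| KBool of bform
| KCond of bform & bform
| KAnd of kform & kform.

Variable Stp : Type.
Inductive stp : Type := Univ | Sym of Stp.

Inductive modality : Type := MBox | MDia.

Inductive dform : Type :=
| DKLM of kform
| DMod of modality & stp & dform
| DAnd of dform & dform.

Definition nf_atom (t : modality * stp * kform) : dform :=
  let: (m, s, f) := t in DMod m s (DKLM f).

Definition nf_formula (h : modality * stp * kform) (tl : seq (modality * stp * kform)) : dform :=
  foldl (fun acc t => DAnd acc (nf_atom t)) (nf_atom h) tl.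
End Syntax.

Arguments Univ {Stp}.

Section Semantics.
Variable Atom : finType.
Variable Stp : Type.

Definition valuation := Atom -> bool.

Fixpoint bsat (u : valuation) (a : bform Atom) : bool :=
  match a with
  | BTop => true
  | BBot => false
  | BAtom p => u p
  | BNot b => ~~ bsat u b
  | BAnd b c => bsat u b && bsat u c
  | BOr b c => bsat u b || bsat u c
  | BImp b c => bsat u b ==> bsat u c
  end.

(* A ranked interpretation: R : U -> N \cup {oo} (None = oo) with convexity:
   if R(u) = i then for every j < i some u' has R(u') = j. *)
Record ranked_interp : Type := RankedInterp {
  rank : valuation -> option nat;
  rank_convex : forall u i j, rank u = Some i -> j < i -> exists u', rank u' = Some j
}.

Definition alpha_world (R : ranked_interp) (a : bform Atom) (u : valuation) : Prop :=
  exists i, rank R u = Some i /\ bsat u a.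

Definition min_alpha_world (R : ranked_interp) (a : bform Atom) (u : valuation) : Prop :=
  exists i, rank R u = Some i /\ bsat u a /\
    forall v j, rank R v = Some j -> bsat v a -> i <= j.

Fixpoint ksat (R : ranked_interp) (f : kform Atom) : Prop :=
  match f with
  | KBool a => forall u, (exists i, rank R u = Some i) -> bsat u a
  | KCond a b => forall u, min_alpha_world R a u -> bsat u b
  | KAnd f g => ksat R f /\ ksat R g
  end.

Record rstructure : Type := RStructure {
  Prec : Type;
  sigma : stp Stp -> Prec -> Prop;
  sigma_nonempty : forall s, exists pi, sigma s pi;
  sigma_univ : forall pi, sigma Univ pi;
  gamma : Prec -> ranked_interp
}.

Fixpoint dsat (M : rstructure) (pi : Prec M) (psi : dform Atom Stp) {struct psi} : Prop :=
  match psi with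
  | DKLM f => ksat (gamma pi) f
  | DMod MBox s p => forall pi', sigma s pi' -> @dsat M pi' p
  | DMod MDia s p => exists pi', sigma s pi' /\ @dsat M pi' p
  | DAnd p q => @dsat M pi p /\ @dsat M pi q
  end.

Definition models (M : rstructure) (psi : dform Atom Stp) : Prop :=
  forall pi : Prec M, @dsat M pi psi.

Definition dequiv (psi psi' : dform Atom Stp) : Prop :=
  forall M : rstructure, models M psi <-> models M psi'.
End Semantics.

From mathcomp Require Import all_boot.
From Stdlib Require List.

(* Modal formulas are rigid: their truth does not depend on the precisification.
   So at every precisification a DRSL formula is equivalent to its modality-free
   KLM part together with rigid modal atoms [#_s phi], obtained by pulling rigid
   conjuncts out of the modalities containing them, which is sound because every
   standpoint sees some precisification.  Holding the KLM part at every
   precisification is exactly [Box_* (KLM part)]. *)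

Section NormalForm.
Context {Atom : finType} {Stp : Type}.

Local Notation dform := (dform Atom Stp).
Local Notation kform := (kform Atom).
Local Notation modal_atom := (modality * stp Stp * kform)%type.

Fixpoint local_part (psi : dform) : kform :=
  match psi with
  | DKLM f => f
  | DMod _ _ _ => KBool (BTop Atom)
  | DAnd p q => KAnd (local_part p) (local_part q)
  end.

Fixpoint modal_part (psi : dform) : seq modal_atom :=
  match psi with
  | DKLM _ => [::]
  | DMod m s p => (m, s, local_part p) :: modal_part p
  | DAnd p q => modal_part p ++ modal_part q
  end.

Variable M : rstructure Atom Stp.

Definition modal_sat (m : modality) (s : stp Stp) (P : Prec M -> Prop) : Prop :=
  match m with
  | MBox => forall pi, sigma s pi -> P pi
  | MDia => exists pi, sigma s pi /\ P pi
  end.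

Definition atom_sat (t : modal_atom) : Prop :=
  let: (m, s, f) := t in modal_sat m s (fun pi => ksat (gamma pi) f).

Lemma dsat_DMod (pi : Prec M) m s p :
  dsat pi (DMod m s p) <-> modal_sat m s (fun pi' => dsat pi' p).
Proof. by case: m. Qed.

Lemma modal_sat_ext m s (P Q : Prec M -> Prop) :
  (forall pi, P pi <-> Q pi) -> modal_sat m s P <-> modal_sat m s Q.
Proof.
move=> PQ; case: m => /=; split.
- by move=> HP pi /HP /PQ.
- by move=> HQ pi /HQ /PQ.
- by case=> pi [? /PQ]; exists pi.
- by case=> pi [? /PQ]; exists pi.
Qed.

Lemma modal_sat_andr m s (P : Prec M -> Prop) (G : Prop) :
  modal_sat m s (fun pi => P pi /\ G) <-> modal_sat m s P /\ G.
Proof.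
case: m => /=; split.
- move=> H; split=> [pi /H [] //|].
  by have [pi /H []] := sigma_nonempty M s.
- by move=> [HP HG] pi /HP.
- by case=> pi [sp [HP HG]]; split=> //; exists pi.
- by case=> [[pi [sp HP]] HG]; exists pi.
Qed.

Lemma dsat_nf_atom (pi : Prec M) t : dsat pi (nf_atom t) <-> atom_sat t.
Proof. by case: t => [[m s] f]; apply: dsat_DMod. Qed.

Lemma dsat_foldl_nf_atom (pi : Prec M) acc tl :
  dsat pi (foldl (fun acc t => DAnd acc (nf_atom t)) acc tl)
  <-> dsat pi acc /\ List.Forall atom_sat tl.
Proof.
elim: tl acc => [|t tl IH] acc /=.
  by split=> [|[]//]; split.
rewrite IH /= dsat_nf_atom List.Forall_cons_iff; tauto.
Qed.

Lemma dsat_local_modal (psi : dform) (pi : Prec M) :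
  dsat pi psi <-> ksat (gamma pi) (local_part psi) /\ List.Forall atom_sat (modal_part psi).
Proof.
elim: psi pi => [f|m s p IH|p IHp q IHq] pi.
- by split=> [|[]//]; split.
- rewrite dsat_DMod (modal_sat_ext m s _ _ IH) modal_sat_andr List.Forall_cons_iff.
  by split=> [|[]//]; split.
- by rewrite /= IHp IHq List.Forall_app; tauto.
Qed.

Lemma models_local_modal (psi : dform) :
  models M psi <-> atom_sat (MBox, Univ, local_part psi) /\ List.Forall atom_sat (modal_part psi).
Proof.
rewrite /models /=; split.
- move=> H; split=> [pi _|]; first by case/dsat_local_modal: (H pi).
  by have [pi _] := sigma_nonempty M Univ; case/dsat_local_modal: (H pi).
- by move=> [Hloc Hmod] pi; apply/dsat_local_modal; split=> //; apply/Hloc/sigma_univ.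
Qed.

End NormalForm.

Theorem corollary1 (Atom : finType) (Stp : Type) (psi : dform Atom Stp) :
  exists (h : modality * stp Stp * kform Atom) (tl : seq (modality * stp Stp * kform Atom)),
    dequiv psi (nf_formula h tl).
Proof.
exists (MBox, Univ, local_part psi), (modal_part psi) => M.
rewrite models_local_modal /models /nf_formula.
split=> [H pi | H]; first by apply/dsat_foldl_nf_atom; rewrite dsat_nf_atom.
by have [pi _] := sigma_nonempty M Univ; move: (H pi); rewrite dsat_foldl_nf_atom dsat_nf_atom.
Qed.
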